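(* If a homomorphism distinguishing closed class $\mathcal{F}$ of simple graphs is closed under deleting edges, then it is closed under taking subgraphs.
   Context: All graphs are finite, undirected, without multiple edges; simple means without loops. $\hom(F,G)$ is the number of homomorphisms $F\to G$; $G\equiv_{\mathcal{F}}H$ means $\hom(F,G)=\hom(F,H)$ for all $F\in\mathcal{F}$; $\mathrm{cl}(\mathcal{F})$ is the class of all simple graphs $K$ such that for all simple $G,H$, $G\equiv_{\mathcal{F}}H$ implies $\hom(K,G)=\hom(K,H)$; $\mathcal{F}$ is homomorphism distinguishing closed if $\mathrm{cl}(\mathcal{F})=\mathcal{F}$. Deleting edges yields a graph with the same vertex set and a subset of the edges; subgraphs may also delete vertices. *)

From mathcomp Require Import all_boot.
Set Implicit Arguments. Unset Strict Implicit. Unset Printing Implicit Defensive.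

Record sgraph := SGraph {
  V : finType;
  adj : rel V;
  adj_sym : symmetric adj;
  adj_irr : irreflexive adj }.

Definition hom (F G : sgraph) : nat :=
  #|[set f : {ffun V F -> V G} | [forall x, forall y, adj x y ==> adj (f x) (f y)]]|.

Definition gclass := sgraph -> Prop.

Definition hom_equiv (F : gclass) (G H : sgraph) : Prop :=
  forall K, F K -> hom K G = hom K H.

Definition cl (F : gclass) : gclass :=
  fun K => forall G H : sgraph, hom_equiv F G H -> hom K G = hom K H.

Definition hd_closed (F : gclass) : Prop := forall K, cl F K <-> F K.

(* Deleting edges: keep the same vertices, keep exactly the edges xy of G
   with E x y and E y x; every subset of the edge set arises this way. *)
Definition del_adj (G : sgraph) (E : rel (V G)) : rel (V G) :=
  fun x y => [&& E x y, E y x & adj x y].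

Lemma del_adj_sym G E : symmetric (@del_adj G E).
Proof. by move=> x y; rewrite /del_adj andbCA (@adj_sym G). Qed.

Lemma del_adj_irr G E : irreflexive (@del_adj G E).
Proof. by move=> x; rewrite /del_adj (@adj_irr G) !andbF. Qed.

Definition delete_edges (G : sgraph) (E : rel (V G)) : sgraph :=
  SGraph (@del_adj_sym G E) (@del_adj_irr G E).

Definition sub_adj (G : sgraph) (S : {set V G}) (E : rel (V G))
  : rel {x : V G | x \in S} :=
  fun u v => del_adj E (val u) (val v).

Lemma sub_adj_sym G S E : symmetric (@sub_adj G S E).
Proof. by move=> u v; rewrite /sub_adj del_adj_sym. Qed.

Lemma sub_adj_irr G S E : irreflexive (@sub_adj G S E).
Proof. by move=> u; rewrite /sub_adj del_adj_irr. Qed.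

Definition subgraph (G : sgraph) (S : {set V G}) (E : rel (V G)) : sgraph :=
  SGraph (@sub_adj_sym G S E) (@sub_adj_irr G S E).

Definition closed_under_edge_deletion (F : gclass) : Prop :=
  forall G E, F G -> F (@delete_edges G E).

Definition closed_under_subgraphs (F : gclass) : Prop :=
  forall G S E, F G -> F (@subgraph G S E).

From mathcomp Require Import all_boot.
Set Implicit Arguments. Unset Strict Implicit.

(* Let K be the subgraph of G on S with edge set E, and let G' be G with every
   edge outside K deleted, so that G' is K plus #|~: S| isolated vertices and
   hom(G', X) = hom(K, X) * |X|^#|~: S|.  Both G' and the edgeless graph on V G
   belong to F; the latter gives hom = |X|^#|V G|, so G1 and G2 equivalent over
   F have equally many vertices, and cancelling that factor from the equality
   for G' yields hom(K, G1) = hom(K, G2), i.e. K is in cl F = F. *)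

Definition is_hom (K X : sgraph) (f : {ffun V K -> V X}) : bool :=
  [forall x, forall y, adj x y ==> adj (f x) (f y)].

Lemma homE (K X : sgraph) : hom K X = #|[set f | @is_hom K X f]|.
Proof. by []. Qed.

Lemma hom_all_maps (K X : sgraph) :
  (forall f, @is_hom K X f) -> hom K X = #|V X| ^ #|V K|.
Proof.
move=> all_hom; rewrite homE -card_ffun -cardsT.
by apply: eq_card => f; rewrite !inE all_hom.
Qed.

Lemma hom_edgeless (K X : sgraph) :
  (forall x y : V K, ~~ adj x y) -> hom K X = #|V X| ^ #|V K|.
Proof.
move=> no_edge; apply: hom_all_maps => f.
by apply/forallP => x; apply/forallP => y; rewrite (negbTE (no_edge x y)).
Qed.

Lemma hom_to_empty (K X : sgraph) : #|V X| = 0 -> hom K X = 0 ^ #|V K|.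
Proof.
move=> X0; rewrite -X0; apply: hom_all_maps => f.
by apply/forallP => x; move: (card0_eq X0 (f x)); rewrite inE.
Qed.

Section SplitFfun.

Variables (T R : finType) (S : {set T}).

Definition split_ffun (f : {ffun T -> R}) :
    {ffun {x | x \in S} -> R} * {ffun {x | x \notin S} -> R} :=
  ([ffun u => f (val u)], [ffun u => f (val u)]).

Lemma split_ffun_inj : injective split_ffun.
Proof.
move=> f g [fgS fgC]; apply/ffunP => x; case: (boolP (x \in S)) => Sx.
  by have := congr1 (fun h : {ffun _ -> R} => h (exist _ x Sx)) fgS; rewrite !ffunE.
by have := congr1 (fun h : {ffun _ -> R} => h (exist _ x Sx)) fgC; rewrite !ffunE.
Qed.

Lemma card_ffun_in : #|{ffun {x | x \in S} -> R}| = #|R| ^ #|S|.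
Proof. by rewrite card_ffun card_sig; congr (_ ^ _); apply: eq_card. Qed.

Lemma card_ffun_notin : #|{ffun {x | x \notin S} -> R}| = #|R| ^ #|~: S|.
Proof.
by rewrite card_ffun card_sig; congr (_ ^ _); apply: eq_card => x; rewrite !inE.
Qed.

Lemma split_ffun_bij : bijective split_ffun.
Proof.
apply: inj_card_bij split_ffun_inj _.
by rewrite card_prod card_ffun_in card_ffun_notin card_ffun -expnD cardsC.
Qed.

End SplitFfun.

Section SubgraphPlusIsolated.

Variables (G : sgraph) (S : {set V G}) (E : rel (V G)).

Definition subgraph_edges : rel (V G) := fun x y => [&& x \in S, y \in S & E x y].

Lemma is_hom_subgraph_edges (X : sgraph) (f : {ffun V G -> V X}) :
  @is_hom (delete_edges subgraph_edges) X f =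
  @is_hom (subgraph S E) X (split_ffun S f).1.
Proof.
apply/forallP/forallP => [hom_f u | hom_g x].
  apply/forallP => v; apply/implyP => /and3P [Euv Evu uv]; rewrite !ffunE.
  apply: (implyP (forallP (hom_f (val u)) (val v))).
  by rewrite /= /del_adj /subgraph_edges (valP u) (valP v) Euv Evu uv.
apply/forallP => y; apply/implyP.
case/and3P => /and3P [Sx Sy Exy] /and3P [_ _ Eyx] xy.
have := implyP (forallP (hom_g (exist _ x Sx)) (exist _ y Sy)).
by rewrite !ffunE; apply; rewrite /= /sub_adj /del_adj Exy Eyx xy.
Qed.

Lemma hom_subgraph_plus_isolated (X : sgraph) :
  hom (delete_edges subgraph_edges) X = hom (subgraph S E) X * #|V X| ^ #|~: S|.
Proof.
have split_homs : [set f | @is_hom (delete_edges subgraph_edges) X f] =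
    split_ffun S @^-1: setX [set g | @is_hom (subgraph S E) X g] setT.
  by apply/setP => f; rewrite !inE andbT is_hom_subgraph_edges.
rewrite homE split_homs on_card_preimset; last exact/onW_bij/split_ffun_bij.
by rewrite cardsX cardsT card_ffun_notin.
Qed.

End SubgraphPlusIsolated.

Theorem lemma12 (F : gclass) :
  hd_closed F -> closed_under_edge_deletion F -> closed_under_subgraphs F.
Proof.
move=> hdF delF G S E FG; apply/hdF => G1 G2 equiv12.
have hom_split := equiv12 _ (delF _ (subgraph_edges S E) FG).
rewrite !hom_subgraph_plus_isolated in hom_split.
have card_pow := equiv12 _ (delF _ (fun _ _ => false) FG).
rewrite !hom_edgeless // in card_pow.
have [S_full | C_pos] := posnP #|~: S|.
  by move: hom_split; rewrite S_full !expn0 !muln1.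
have G_pos : 0 < #|V G| by rewrite -(cardsC S) (leq_trans C_pos) ?leq_addl.
have /eqP card12 : #|V G1| == #|V G2| by rewrite -(eqn_exp2r _ _ G_pos) card_pow.
have [G1_empty | G1_pos] := posnP #|V G1|.
  by rewrite !hom_to_empty -?card12.
apply/eqP; rewrite -(@eqn_pmul2r (#|V G1| ^ #|~: S|)) ?expn_gt0 ?G1_pos //.
by rewrite hom_split card12.
Qed.
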